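(* Let ${}^*\mathbb{Z}=\mathbb{Z}^I/\mathcal{U}$ be an ultrapower of $\mathbb{Z}$ with respect to a nonprincipal ultrafilter $\mathcal{U}$ on a countably infinite set $I$, and let $\mathfrak{m}$ be a maximal ideal of ${}^*\mathbb{Z}$, with $\nu_{\mathfrak{m}}$ and $S_{\mathfrak{m}}$ as in the context. Then $P\mapsto\nu_{\mathfrak{m}}\big((P\,{}^*\mathbb{Z}_{\mathfrak{m}})\setminus\{0\}\big)$ is a one-to-one correspondence between the prime ideals $P$ of ${}^*\mathbb{Z}$ contained in $\mathfrak{m}$ and the proper radical subsemigroups of $S_{\mathfrak{m}}$ without right-end-point.
   Context: It is known (Olberding–Saydam) that the localization ${}^*\mathbb{Z}_{\mathfrak{m}}$ is a valuation domain; let $\nu_{\mathfrak{m}}$ be its valuation, with values in a totally ordered abelian group written multiplicatively, $\nu_{\mathfrak{m}}(a)\le\nu_{\mathfrak{m}}(b)$ iff $b/a\in{}^*\mathbb{Z}_{\mathfrak{m}}$, and $S_{\mathfrak{m}}=\nu_{\mathfrak{m}}({}^*\mathbb{Z}_{\mathfrak{m}}\setminus\{0\})$ as an ordered semigroup. A subsemigroup $T\subseteq S_{\mathfrak{m}}$ (a subset closed under multiplication) is proper if $T\neq S_{\mathfrak{m}}$; convex if $t_1<s<t_2$ with $t_1,t_2\in T$ implies $s\in T$; radical if whenever $x\in T$, $n>0$, $y\in S_{\mathfrak{m}}$, $y^n=x$, then $y\in T$; and without right-end-point if it is convex and $x\in T$, $y\in S_{\mathfrak{m}}$, $x<y$ imply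 $y\in T$. *)

From HB Require Import structures.
From mathcomp Require Import all_boot all_order all_algebra.
From mathcomp Require Import boolp classical_sets functions.
From mathcomp Require Import ring_quotient fraction.

Set Implicit Arguments.
Unset Strict Implicit.
Unset Printing Implicit Defensive.

Import Order.TTheory GRing.Theory Num.Theory.
Local Open Scope ring_scope.
Local Open Scope classical_set_scope.

Record npultrafilter (I : Type) := NPUltrafilter {
  uf :> set (set I);
  uf_setT : uf setT;
  uf_set0 : ~ uf set0;
  uf_super : forall A B : set I, uf A -> A `<=` B -> uf B;
  uf_setI : forall A B : set I, uf A -> uf B -> uf (A `&` B);
  uf_ultra : forall A : set I, uf A \/ uf (~` A);
  uf_nonprincipal : forall i : I, ~ uf [set i]
}.

Section Ultrapower.
Variables (I : pointedType) (U : npultrafilter I).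

Definition uf_null : {pred (I -> int)} := fun x => `[< uf U [set i | x i = 0] >].

Lemma uf_null_idealr_closed : idealr_closed uf_null.
Proof.
split.
- by apply/asboolP; apply: uf_super (@uf_setT _ U) _ => i _.
- apply/negP; rewrite /in_mem /= /uf_null => /asboolP H.
  have := @uf_set0 _ U; apply.
  by apply: uf_super H _ => i /=.
- move=> a u v /asboolP Hu /asboolP Hv; apply/asboolP.
  apply: uf_super (uf_setI Hu Hv) _ => i /= [ui vi].
  by rewrite /GRing.add /GRing.mul /= ui vi mulr0 addr0.
Qed.

HB.instance Definition _ := isIdealr.Build (I -> int) uf_null
  uf_null_idealr_closed.

Lemma uf_null_prime : prime_idealr_closed uf_null.
Proof.
move=> u v /asboolP H; apply/orP.
case: (@uf_ultra _ U [set i | u i = 0]) => Hu; [by left; apply/asboolP|].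
right; apply/asboolP; apply: uf_super (uf_setI H Hu) _ => i /= [].
rewrite /GRing.mul /= => /eqP; rewrite mulf_eq0 => /orP[/eqP //|/eqP ? ].
by [].
Qed.

HB.instance Definition _ := isPrimeIdealrClosed.Build (I -> int) uf_null
  uf_null_prime.

Definition zstar := @Quotient.quot (I -> int) uf_null.

HB.instance Definition _ := GRing.ComNzRing.on zstar.

Definition zs_unit : {pred zstar} := fun x => `[< exists y : zstar, y * x = 1 >].
Definition zs_inv (x : zstar) : zstar :=
  match pselect (exists y : zstar, y * x = 1) with
  | left h => projT1 (cid h)
  | right _ => x
  end.

Lemma zs_mulVx : {in zs_unit, left_inverse 1 zs_inv *%R}.
Proof.
move=> x /asboolP h; rewrite /zs_inv; case: pselect => // h'.
by case: cid.
Qed.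

Lemma zs_unitPl : forall x y : zstar, y * x = 1 -> zs_unit x.
Proof. by move=> x y h; apply/asboolP; exists y. Qed.

Lemma zs_invr_out : {in [predC zs_unit], zs_inv =1 id}.
Proof.
move=> x; rewrite inE /= => /asboolPn h; rewrite /zs_inv.
by case: pselect.
Qed.

HB.instance Definition _ := GRing.ComNzRing_hasMulInverse.Build zstar
  zs_mulVx zs_unitPl zs_invr_out.

HB.instance Definition _ := GRing.ComUnitRing_isIntegral.Build zstar
  (@Quotient.rquot_IdomainAxiom _ uf_null).

End Ultrapower.

Section Ideals.
Variable R : comNzRingType.

Definition is_ideal (J : set R) : Prop :=
  [/\ J 0, (forall x y, J x -> J y -> J (x + y))
    & (forall r x, J x -> J (r * x))].

Definition is_prime_ideal (P : set R) : Prop :=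
  [/\ is_ideal P, ~ P 1 & forall a b, P (a * b) -> P a \/ P b].

Definition is_maximal_ideal (M : set R) : Prop :=
  [/\ is_ideal M, ~ M 1 &
      forall J : set R, is_ideal J -> M `<=` J -> J = M \/ J = setT].

End Ideals.

(* Localization at a maximal ideal m of a domain R, inside the fraction      *)
(* field K = {fraction R}, and the associated valuation nu_m with values in  *)
(* the value group K^x / (R_m)^x (elements = cosets  x (R_m)^x  in K).       *)

Section Valuation.
Variables (R : idomainType) (m : set R).

Local Notation K := {fraction R}.
Local Notation "x %:F" := (@FracField.tofrac R x).

Definition loc : set K :=
  [set x | exists a s : R, ~ m s /\ x = a%:F / s%:F].

Definition loc_units : set K :=
  [set u | loc u /\ exists v, loc v /\ u * v = 1].

Definition nu (x : K) : set K := [set y | exists2 u, loc_units u & y = u * x].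

Definition vmul (A B : set K) : set K :=
  [set c | exists a b, [/\ A a, B b & c = a * b]].

Definition vle (A B : set K) : Prop :=
  exists a b, [/\ A a, B b & loc (b / a)].

Definition vlt (A B : set K) : Prop := vle A B /\ A <> B.

Definition vpow (A : set K) (n : nat) : set K := iter n (vmul A) (nu 1).

Definition Sm : set (set K) := nu @` (loc `\ 0).

(* The ideal P R_m of R_m generated by (the image of) a subset P of R. *)
Definition ext_ideal (P : set R) : set K :=
  [set x | forall J : set K,
     J 0 -> (forall y z, J y -> J z -> J (y + z)) ->
     (forall r y, loc r -> J y -> J (r * y)) ->
     (forall p, P p -> J p%:F) -> J x].

Definition Phi (P : set R) : set (set K) := nu @` (ext_ideal P `\ 0).

Definition subsemigroup (T : set (set K)) : Prop :=
  T `<=` Sm /\ (forall x y, T x -> T y -> T (vmul x y)).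

Definition proper_sub (T : set (set K)) : Prop := T <> Sm.

Definition convex (T : set (set K)) : Prop :=
  forall t1 t2 s, T t1 -> T t2 -> Sm s -> vlt t1 s -> vlt s t2 -> T s.

Definition radical (T : set (set K)) : Prop :=
  forall x n y, T x -> (0 < n)%N -> Sm y -> vpow y n = x -> T y.

Definition without_right_end_point (T : set (set K)) : Prop :=
  convex T /\ (forall x y, T x -> Sm y -> vlt x y -> T y).

Definition good_subsemigroup (T : set (set K)) : Prop :=
  [/\ subsemigroup T, proper_sub T, radical T & without_right_end_point T].

End Valuation.

From HB Require Import structures.
From mathcomp Require Import all_boot all_order all_algebra.
From mathcomp Require Import boolp classical_sets functions.
From mathcomp Require Import ring_quotient fraction.
From mathcomp Require Import ring.
Import GRing.Theory.
Set Implicit Arguments.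
Unset Strict Implicit.
Unset Printing Implicit Defensive.
Local Open Scope ring_scope.
Local Open Scope classical_set_scope.

(* *Z is a Bezout domain, pointwise from Z, so its localization Z_m at a
   maximal ideal m is a valuation ring: for x, y in Z_m, x/y or y/x lies in
   Z_m.  For a prime P inside m, P Z_m is an ideal of this valuation ring, so
   its nonzero values form an up-closed subsemigroup of S_m; it is proper since
   P Z_m misses 1, and radical since P is prime and P Z_m contracts to P.
   Conversely, a proper radical up-closed T comes from the ideal
   {0} u nu^-1(T) of Z_m: it is closed under sums because x + y is a Z_m
   multiple of x or of y, and its contraction to *Z is prime by radicality. *)

Definition coprime_cofactors (R : comNzRingType) : Prop :=
  forall a b : R, exists d a' b' u v : R,
    [/\ a = d * a', b = d * b' & u * a' + v * b' = 1].

Lemma int_coprime_cofactors : coprime_cofactors int.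
Proof.
move=> a b.
have [/andP[/eqP-> /eqP->]|nz] := boolP ((a == 0) && (b == 0)).
  by exists 0, 1, 0, 1, 0; split; rewrite ?mul0r ?mulr0 ?addr0 ?mulr1.
have g0 : gcdz a b != 0 by rewrite gcdz_eq0.
have [u [v Huv]] := Bezoutz a b.
exists (gcdz a b), (a %/ gcdz a b)%Z, (b %/ gcdz a b)%Z, u, v.
have ea : a = gcdz a b * (a %/ gcdz a b)%Z by rewrite mulrC divzK // dvdz_gcdl.
have eb : b = gcdz a b * (b %/ gcdz a b)%Z by rewrite mulrC divzK // dvdz_gcdr.
split => //; apply: (mulfI g0).
by rewrite mulr1 mulrDr mulrCA [X in _ + X]mulrCA -ea -eb.
Qed.

Section Ultrapower.
Local Open Scope quotient_scope.

Lemma zstar_coprime_cofactors (I : pointedType) (U : npultrafilter I) :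
  coprime_cofactors (zstar U).
Proof.
move=> x y; pose rx := repr x; pose ry := repr y.
have /choice[F HF] : forall i : I, exists t : int * int * int * int * int,
    [/\ rx i = t.1.1.1.1 * t.1.1.1.2, ry i = t.1.1.1.1 * t.1.1.2
      & t.1.2 * t.1.1.1.2 + t.2 * t.1.1.2 = 1].
  move=> i; have [d [a [b [u [v [h1 h2 h3]]]]]] := int_coprime_cofactors (rx i) (ry i).
  by exists (d, a, b, u, v).
pose pi f := \pi_(zstar U) f.
exists (pi (fun i => (F i).1.1.1.1)), (pi (fun i => (F i).1.1.1.2)),
  (pi (fun i => (F i).1.1.2)), (pi (fun i => (F i).1.2)), (pi (fun i => (F i).2)).
rewrite /pi -!rmorphM -rmorphD -(rmorph1 (\pi_(zstar U))).
split; [rewrite -[x]reprK|rewrite -[y]reprK|];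
  by congr (\pi _); apply/funext => i; case: (HF i).
Qed.

End Ultrapower.

Lemma maximal_ideal_prime (R : comNzRingType) (M : set R) :
  is_maximal_ideal M -> is_prime_ideal M.
Proof.
move=> [[M0 MD MM] M1 Mmax]; split => // a b Mab.
case: (pselect (M a)) => Ma; [by left|right].
pose J := [set x | exists y r, M y /\ x = y + r * a].
have J_ideal : is_ideal J.
  split.
  - by exists 0, 0; rewrite mul0r addr0.
  - move=> _ _ [y1 [r1 [h1 ->]]] [y2 [r2 [h2 ->]]].
    by exists (y1 + y2), (r1 + r2); split; [exact: MD|ring].
  - move=> r _ [y [s [h ->]]].
    by exists (r * y), (r * s); split; [exact: MM|ring].
have MJ : M `<=` J by move=> x Mx; exists x, 0; rewrite mul0r addr0.
case: (Mmax J J_ideal MJ) => EJ.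
  by case: Ma; rewrite -EJ; exists 0, 1; rewrite add0r mul1r.
have [y [r [My e]]] : J 1 by rewrite EJ.
have -> : b = b * y + r * (a * b) by rewrite -[b in LHS]mulr1 e; ring.
by apply: MD; apply: MM.
Qed.

Section Localization.
Variables (R : idomainType) (m : set R).
Hypothesis m_max : is_maximal_ideal m.

Local Notation K := {fraction R}.
Local Notation "x %:F" := (@FracField.tofrac R x).
Local Notation loc := (loc m).
Local Notation unit_loc := (loc_units m).
Local Notation nu := (nu m).

Let m_prime := maximal_ideal_prime m_max.

Lemma m0 : m 0. Proof. by case: m_prime => -[]. Qed.
Lemma m1 : ~ m 1. Proof. by case: m_prime. Qed.
Lemma mD x y : m x -> m y -> m (x + y). Proof. by case: m_prime => -[_ MD _] _ _; apply: MD. Qed.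
Lemma mM r x : m x -> m (r * x). Proof. by case: m_prime => -[_ _ MM] _ _; apply: MM. Qed.

Lemma notm_mul s t : ~ m s -> ~ m t -> ~ m (s * t).
Proof. by case: m_prime => _ _ mp ms mt /mp[]. Qed.

Lemma notm_tofrac_neq0 s : ~ m s -> s%:F != 0.
Proof. by move=> ms; rewrite tofrac_eq0; apply: contra_notN ms => /eqP->; exact: m0. Qed.

Lemma loc_frac a s : ~ m s -> loc (a%:F / s%:F).
Proof. by move=> ms; exists a, s. Qed.

Lemma loc_tofrac r : loc r%:F.
Proof. by rewrite -[r%:F]divr1 -tofrac1; apply: loc_frac; exact: m1. Qed.

Lemma loc0 : loc 0. Proof. by rewrite -tofrac0; exact: loc_tofrac. Qed.
Lemma loc1 : loc 1. Proof. by rewrite -tofrac1; exact: loc_tofrac. Qed.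

Lemma locD x y : loc x -> loc y -> loc (x + y).
Proof.
move=> [a [s [ms ->]]] [b [t [mt ->]]].
exists (a * t + b * s), (s * t); split; first exact: notm_mul.
by rewrite addf_div ?notm_tofrac_neq0 // tofracD !tofracM.
Qed.

Lemma locM x y : loc x -> loc y -> loc (x * y).
Proof.
move=> [a [s [ms ->]]] [b [t [mt ->]]].
by exists (a * b), (s * t); split; [exact: notm_mul|rewrite !tofracM mulf_div].
Qed.

Lemma unit_loc1 : unit_loc 1.
Proof. by split; [exact: loc1|exists 1; rewrite mulr1; split; first exact: loc1]. Qed.

Lemma unit_locM u w : unit_loc u -> unit_loc w -> unit_loc (u * w).
Proof.
move=> [lu [u' [lu' eu]]] [lw [w' [lw' ew]]]; split; first exact: locM.
by exists (u' * w'); split; [exact: locM|rewrite mulrACA eu ew mulr1].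
Qed.

Lemma unit_loc_neq0 u : unit_loc u -> u != 0.
Proof. by move=> [_ [v [_ /eqP]]]; apply: contraL => /eqP->; rewrite mul0r eq_sym oner_eq0. Qed.

Lemma unit_loc_inv u : unit_loc u -> loc u^-1.
Proof.
move=> uu; have u0 := unit_loc_neq0 uu; have [_ [v [lv uv1]]] := uu.
by rewrite -[u^-1]mulr1 -uv1 mulKf.
Qed.

Lemma nu_refl x : nu x x.
Proof. by exists 1; [exact: unit_loc1|rewrite mul1r]. Qed.

Lemma nu_eq x y : nu x = nu y -> exists2 u, unit_loc u & x = u * y.
Proof. by move=> e; have := nu_refl x; rewrite e. Qed.

Lemma vmul_nu x y : vmul (nu x) (nu y) = nu (x * y).
Proof.
apply/seteqP; split => c.
  move=> [_ [_ [[u uu ->] [w uw ->] ->]]].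
  by exists (u * w); [exact: unit_locM|rewrite mulrACA].
move=> [u uu ->]; exists (u * x), y; split; [by exists u|exact: nu_refl|].
by rewrite mulrA.
Qed.

Lemma vpow_nu x n : vpow m (nu x) n = nu (x ^+ n).
Proof.
elim: n => [|n IH]; first by rewrite expr0.
by rewrite /vpow iterS -/(vpow m (nu x) n) IH vmul_nu exprS.
Qed.

Lemma vle_nu_loc x y : vle m (nu x) (nu y) -> loc (y / x).
Proof.
move=> [_ [_ [[u uu ->] [w uw ->] lwu]]].
have u0 := unit_loc_neq0 uu; have w0 := unit_loc_neq0 uw.
have -> : y / x = w^-1 * u * (w * y / (u * x)) by rewrite invfM mulrACA mulKf // mulVKf.
by apply: locM => //; apply: locM; [exact: unit_loc_inv|case: uu].
Qed.

Lemma loc_vle_nu x y : loc (y / x) -> vle m (nu x) (nu y).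
Proof. by move=> lyx; exists x, y; split => //; exact: nu_refl. Qed.

Lemma Sm_nu x : loc x -> x != 0 -> Sm m (nu x).
Proof. by move=> lx x0; exists x => //; split => //; apply/eqP. Qed.

Lemma Sm_nuP x : Sm m (nu x) -> loc x /\ x != 0.
Proof.
move=> [y [ly /eqP y0] /esym /nu_eq [u uu ->]].
by split; [apply: locM => //; case: uu|rewrite mulf_neq0 // unit_loc_neq0].
Qed.

Section ExtendedIdeal.
Variable P : set R.
Hypotheses (P_prime : is_prime_ideal P) (Pm : P `<=` m).

Local Notation ext := (ext_ideal m P).

Lemma ext_idealM r x : loc r -> ext x -> ext (r * x).
Proof. by move=> lr extx J J0 JD JM JP; apply: (JM) => //; exact: extx. Qed.

Lemma ext_ideal_tofrac p : P p -> ext p%:F.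
Proof. by move=> Pp J _ _ _; apply. Qed.

Lemma ext_ideal_frac a s : P a -> ~ m s -> ext (a%:F / s%:F).
Proof.
move=> Pa ms; rewrite mulrC; apply: ext_idealM; last exact: ext_ideal_tofrac.
by rewrite -div1r -tofrac1; exact: loc_frac.
Qed.

Lemma ext_idealP x : ext x -> exists a s, [/\ P a, ~ m s & x = a%:F / s%:F].
Proof.
case: P_prime => [[P0 PD PM] _ _] extx.
apply: (extx (fun y => exists a s, [/\ P a, ~ m s & y = a%:F / s%:F])).
- by exists 0, 1; split => //; [exact: m1|rewrite tofrac0 mul0r].
- move=> _ _ [a [s [Pa ms ->]]] [b [t [Pb mt ->]]].
  exists (a * t + b * s), (s * t); split.
  + by apply: PD; rewrite mulrC; apply: PM.
  + exact: notm_mul.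
  + by rewrite addf_div ?notm_tofrac_neq0 // tofracD !tofracM.
- move=> _ _ [c [u [mu ->]]] [a [s [Pa ms ->]]].
  by exists (c * a), (u * s); split; [exact: PM|exact: notm_mul|rewrite !tofracM mulf_div].
- by move=> p Pp; exists p, 1; split => //; [exact: m1|rewrite tofrac1 divr1].
Qed.

Lemma ext_ideal_loc x : ext x -> loc x.
Proof. by move=> /ext_idealP [a [s [_ ms ->]]]; exact: loc_frac. Qed.

(* The contraction of P Z_m to R is P again, because P is prime and misses R \ m. *)
Lemma ext_ideal_contr r : ext r%:F -> P r.
Proof.
move=> /ext_idealP [a [s [Pa ms e]]].
have /eqP : (r * s)%:F = a%:F by rewrite tofracM e divfK // notm_tofrac_neq0.
rewrite tofrac_eq => /eqP ersa.
by case: P_prime => _ _ /(_ r s); rewrite ersa => /(_ Pa) [|/Pm].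
Qed.

Lemma ext_ideal_nu x y : ext x -> nu x = nu y -> ext y.
Proof. by move=> extx /esym /nu_eq [u [lu _] ->]; exact: ext_idealM. Qed.

Lemma PhiP x : Phi m P (nu x) <-> ext x /\ x != 0.
Proof.
split=> [[z [ez /eqP z0] e]|[extx x0]]; last by exists x => //; split => //; apply/eqP.
split; first exact: ext_ideal_nu e.
by have [u uu ->] := nu_eq (esym e); rewrite mulf_neq0 // unit_loc_neq0.
Qed.

Lemma Phi_up x y : Phi m P x -> Sm m y -> vle m x y -> Phi m P y.
Proof.
move=> [z [ez /eqP z0] <-] [b [lb /eqP b0] <-] zb.
by apply/PhiP; split => //; rewrite -(divfK z0 b); apply: ext_idealM => //; exact: vle_nu_loc.
Qed.

Lemma prime_expn n p : P (p ^+ n.+1) -> P p.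
Proof.
case: P_prime => _ _ Pp; elim: n => [|n IH]; first by rewrite expr1.
by rewrite exprS => /Pp [//|/IH].
Qed.

Lemma Phi_radical : radical m (Phi m P).
Proof.
move=> _ [|n] y [z [ez _] <-] // _ [b [[c [s [ms ebc]]] /eqP b0] <-].
rewrite vpow_nu => e; have ebn := ext_ideal_nu ez (esym e).
have s0 := notm_tofrac_neq0 ms.
have Pc : P c.
  apply: (@prime_expn n); apply: ext_ideal_contr.
  have -> : (c ^+ n.+1)%:F = (s ^+ n.+1)%:F * b ^+ n.+1.
    by rewrite ebc expr_div_n -!tofracXn mulrC divfK // tofracXn expf_neq0.
  by apply: ext_idealM => //; exact: loc_tofrac.
by apply/PhiP; rewrite ebc; split => //; [exact: ext_ideal_frac|rewrite -ebc].
Qed.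

Lemma Phi_good : good_subsemigroup m (Phi m P).
Proof.
split.
- split=> [_ [z [ez /eqP z0] <-]|_ _ [x [extx /eqP x0] <-] [y [ey /eqP y0] <-]].
    by apply: Sm_nu => //; exact: ext_ideal_loc.
  rewrite vmul_nu; apply/PhiP; split; last by rewrite mulf_neq0.
  by apply: ext_idealM => //; exact: ext_ideal_loc.
- move=> PhiE; have : Sm m (nu 1) by apply: Sm_nu; [exact: loc1|exact: oner_neq0].
  rewrite -PhiE => /PhiP [ext1 _]; case: P_prime => _ P1 _; apply: P1.
  by apply: ext_ideal_contr; rewrite tofrac1.
- exact: Phi_radical.
- by split=> [t1 t2 s /Phi_up + _ Ss [+ _] _|x y /Phi_up + Sy [+ _]]; apply.
Qed.

End ExtendedIdeal.

Lemma Phi_sub P1 P2 : is_prime_ideal P2 -> P2 `<=` m ->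
  Phi m P1 = Phi m P2 -> P1 `<=` P2.
Proof.
move=> P2_prime P2m E r P1r.
have [->|r0] := eqVneq r 0; first by case: P2_prime => -[].
have : Phi m P1 (nu r%:F).
  by exists r%:F => //; split; [exact: ext_ideal_tofrac|apply/eqP; rewrite tofrac_eq0].
by rewrite E => /PhiP [/(ext_ideal_contr P2_prime P2m)].
Qed.

Section ValuationRing.
Hypothesis R_cofactors : coprime_cofactors R.

(* With a = d a', b = d b' and u a' + v b' = 1, a' and b' cannot both lie in m. *)
Lemma loc_frac_total a b : loc (b%:F / a%:F) \/ loc (a%:F / b%:F).
Proof.
have [d [a' [b' [u [v [-> -> uv1]]]]]] := R_cofactors a b.
have [->|d0] := eqVneq d 0; first by left; rewrite !(mul0r, tofrac0); exact: loc0.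
have d0F : d%:F != 0 by rewrite tofrac_eq0.
have cancel_d x y : (d * x)%:F / (d * y)%:F = x%:F / y%:F.
  by rewrite !tofracM invfM mulrACA mulfV // mul1r.
rewrite !cancel_d; case: (pselect (m a')) => ma'; last by left; exact: loc_frac.
case: (pselect (m b')) => mb'; last by right; exact: loc_frac.
by case: m1; rewrite -uv1; apply: mD; apply: mM.
Qed.

Lemma loc_total x y : loc x -> loc y -> loc (y / x) \/ loc (x / y).
Proof.
move=> [a [s [_ ->]]] [b [t [_ ->]]].
have frac_div (p q u w : R) : (p%:F / q%:F) / (u%:F / w%:F) = (p * w)%:F / (u * q)%:F.
  by rewrite invf_div mulf_div [q%:F * _]mulrC !tofracM.
by rewrite !frac_div; exact: loc_frac_total.
Qed.

Section SubsemigroupIdeal.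
Variable T : set (set K).
Hypothesis T_good : good_subsemigroup m T.

Lemma good_Sm t : T t -> Sm m t.
Proof. by case: T_good => -[+ _] _ _ _; apply. Qed.

Lemma good_mul_loc x w : T (nu x) -> loc w -> w != 0 -> T (nu (w * x)).
Proof.
move=> Tx lw w0; case: (pselect (nu (w * x) = nu x)) => [->//|ne].
have [lx x0] := Sm_nuP (good_Sm Tx).
case: T_good => _ _ _ [_ up]; apply: (up (nu x)) => //.
  by apply: Sm_nu; [exact: locM|rewrite mulf_neq0].
by split=> [|/esym//]; apply: loc_vle_nu; rewrite mulfK.
Qed.

Lemma good_nu1 : ~ T (nu 1).
Proof.
move=> T1; case: T_good => _ T_proper _ _; apply: T_proper.
apply/seteqP; split=> [t|_ [y [ly /eqP y0] <-]]; first exact: good_Sm.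
by rewrite -[y]mulr1; exact: good_mul_loc.
Qed.

Definition val_ideal (x : K) : Prop := x = 0 \/ T (nu x).

Lemma val_idealD x y : val_ideal x -> val_ideal y -> val_ideal (x + y).
Proof.
move=> [->|Tx]; first by rewrite add0r.
move=> [->|Ty]; first by rewrite addr0; right.
have [lx x0] := Sm_nuP (good_Sm Tx); have [ly y0] := Sm_nuP (good_Sm Ty).
have [->|s0] := eqVneq (x + y) 0; [by left|right].
have up z w : z != 0 -> T (nu z) -> loc (w / z) -> z + w != 0 -> T (nu (z + w)).
  move=> z0 Tz lwz; have -> : z + w = (1 + w / z) * z by rewrite mulrDl mul1r divfK.
  move=> zw0; apply: good_mul_loc => //; first exact: locD loc1 lwz.
  by apply: contraNneq zw0 => ->; rewrite mul0r.
case: (loc_total lx ly) => [lyx|lxy]; first exact: up.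
by rewrite addrC; apply: up; rewrite // addrC.
Qed.

Lemma val_idealM r y : loc r -> val_ideal y -> val_ideal (r * y).
Proof.
move=> lr [->|Ty]; first by rewrite mulr0; left.
by have [->|r0] := eqVneq r 0; [rewrite mul0r; left|right; exact: good_mul_loc].
Qed.

Definition contr_ideal (r : R) : Prop := val_ideal r%:F.

(* (b/a)(ab) = b^2 puts nu(b)^2 above nu(ab), and radicality then gives nu(b). *)
Lemma contr_ideal_dominated a b : loc (b%:F / a%:F) -> T (nu (a * b)%:F) -> contr_ideal b.
Proof.
move=> lba Tab; have [_] := Sm_nuP (good_Sm Tab); rewrite tofracM mulf_eq0 negb_or.
move=> /andP[a0 b0]; right; case: T_good => _ _ rad _.
apply: (rad (nu (b%:F ^+ 2)) 2%N) => //; last by rewrite vpow_nu.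
- have -> : b%:F ^+ 2 = b%:F / a%:F * (a * b)%:F.
    by rewrite tofracM mulrA divfK // expr2.
  by apply: good_mul_loc => //; rewrite mulf_neq0 ?invr_neq0.
- by apply: Sm_nu; [exact: loc_tofrac|].
Qed.

Lemma contr_ideal_prime : is_prime_ideal contr_ideal.
Proof.
split; first split.
- by rewrite /contr_ideal tofrac0; left.
- by move=> x y Px Py; rewrite /contr_ideal tofracD; exact: val_idealD.
- by move=> r x Px; rewrite /contr_ideal tofracM; apply: val_idealM => //; exact: loc_tofrac.
- by rewrite /contr_ideal tofrac1 => -[/eqP|]; [rewrite oner_eq0|exact: good_nu1].
- move=> a b; rewrite /contr_ideal -/(contr_ideal (a * b)) => -[|Tab].
    by rewrite tofracM => /eqP; rewrite mulf_eq0 !tofrac_eq0 => /orP[]/eqP->;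
      [left|right]; rewrite /contr_ideal tofrac0; left.
  case: (loc_total (loc_tofrac a) (loc_tofrac b)) => lab; [right|left].
    exact: contr_ideal_dominated Tab.
  by apply: contr_ideal_dominated lab _; rewrite mulrC.
Qed.

Lemma contr_ideal_sub : contr_ideal `<=` m.
Proof.
move=> r [/eqP|Tr]; first by rewrite tofrac_eq0 => /eqP->; exact: m0.
apply: contrapT => mr; apply: good_nu1.
have := good_mul_loc Tr (loc_frac 1 mr).
by rewrite tofrac1 div1r mulVf ?notm_tofrac_neq0 //; apply; rewrite invr_neq0 ?notm_tofrac_neq0.
Qed.

Lemma Phi_contr_ideal : Phi m contr_ideal = T.
Proof.
apply/seteqP; split=> [_ [z [ez /eqP z0] <-]|t Tt].
  have : val_ideal z.
    by apply: ez => [|y w|r y|p] //; [left|exact: val_idealD|exact: val_idealM].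
  by case=> // /eqP; rewrite (negPf z0).
have [y [[a [s [ms ey]]] /eqP y0] et] := good_Sm Tt.
have Pa : contr_ideal a.
  right; have -> : a%:F = s%:F * y by rewrite ey mulrC divfK ?notm_tofrac_neq0.
  by apply: good_mul_loc; [rewrite et|exact: loc_tofrac|exact: notm_tofrac_neq0].
by rewrite -et; apply/PhiP; split; [rewrite ey; exact: ext_ideal_frac|].
Qed.

End SubsemigroupIdeal.
End ValuationRing.
End Localization.

Theorem theorem4p14 (I : pointedType) (e : nat -> I) (e_bij : bijective e)
    (U : npultrafilter I) (m : set (zstar U)) :
  is_maximal_ideal m ->
  set_bij [set P : set (zstar U) | is_prime_ideal P /\ P `<=` m]
          [set T | good_subsemigroup m T]
          (Phi m).
Proof.
move=> m_max; have R_cofactors := @zstar_coprime_cofactors I U.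
split.
- by move=> P [P_prime Pm]; exact: Phi_good.
- move=> P1 P2 /set_mem [P1_prime P1m] /set_mem [P2_prime P2m] E.
  by apply/seteqP; split; [exact: Phi_sub E|exact: Phi_sub (esym E)].
- move=> T T_good; exists (contr_ideal m T).
    by split; [exact: contr_ideal_prime|exact: contr_ideal_sub].
  exact: Phi_contr_ideal.
Qed.
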